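(* Let $I=(a_1,\dots,a_n)\in(0,1]^n$ be a sorted item sequence, and let $I_1$ be the subsequence of $I$ consisting of the items that are sole class-1 items in the assignment $f$ produced by $MM_2$ on $I$. Then for every assignment $g$ of $I$ without cardinality constraints there exists an assignment $g'$ of $I$ without cardinality constraints such that $g$ and $g'$ use the same number of non-empty bins and every item of $I_1$ is a sole item in $g'$.
   Context: An item sequence $I=(a_1,\dots,a_n)\in(0,1]^n$ is sorted if $a_1\ge\cdots\ge a_n$. An assignment without cardinality constraints is a map $g:\{1,\dots,n\}\to\mathbb{N}$ with $\sum_{i:g(i)=j}a_i\le1$ for each bin $j$; $|g(I)|$ denotes its number of non-empty bins. A class-1 item is an item of size in $(\frac12,1]$; an item is sole if its bin contains no other item. Algorithm $MM_k$: sort the items in non-increasing order (an already sorted input is left unchanged); keep a single open bin with load $S$. Repeat while items remain: if the open bin already contains $k$ items, close it and open a new bin; else if the head (largest remaining) item fits ($S+\text{head}\le1$) pack it; else if the tail (smallest remaining) item fits pack it; else close the open bin permanently and open a new empty bin. $MM_2$ is the case $k=2$. *)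

From HB Require Import structures.
From mathcomp Require Import all_boot all_order all_algebra.
Set Implicit Arguments. Unset Strict Implicit. Unset Printing Implicit Defensive.
Import Order.TTheory GRing.Theory Num.Theory.
Local Open Scope ring_scope.

(* An item sequence I = (a_1,...,a_n) is a list s : seq R; item i (0-based,
   i < size s) has size nth 0 s i.  Items are identified by their index. *)

Definition items_ok {R : realFieldType} (s : seq R) : bool :=
  all (fun x => (0 < x) && (x <= 1)) s.

Definition sorted_items {R : realFieldType} (s : seq R) : bool :=
  sorted (fun x y => y <= x) s.

Definition is_assignment {R : realFieldType} (s : seq R) (g : nat -> nat) : Prop :=
  forall j : nat, \sum_(i < size s | g i == j) nth 0 s i <= 1.

Definition nbins {R : realFieldType} (s : seq R) (g : nat -> nat) : nat :=
  size (undup [seq g i | i <- iota 0 (size s)]).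

Definition sole {R : realFieldType} (s : seq R) (g : nat -> nat) (i : nat) : Prop :=
  forall i', (i' < size s)%N -> i' != i -> g i' != g i.

Definition class1 {R : realFieldType} (s : seq R) (i : nat) : bool :=
  (2%:R)^-1 < nth 0 s i.

Definition upd (f : nat -> nat) (i b : nat) : nat -> nat :=
  fun j => if j == i then b else f j.

(* The main loop of MM_k on an already sorted input.  Remaining items are the
   indices lo..hi-1 (head = lo is the largest, tail = hi-1 the smallest);
   b is the index of the open bin, c the number of items in it, S its load. *)
Fixpoint mm_loop {R : realFieldType} (k : nat) (a : nat -> R)
    (fuel lo hi b c : nat) (S : R) (f : nat -> nat) : nat -> nat :=
  match fuel with
  | 0 => f
  | fuel'.+1 =>
    if (lo < hi)%N then
      if c == k then mm_loop k a fuel' lo hi b.+1 0 0 f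
      else if S + a lo <= 1 then
        mm_loop k a fuel' lo.+1 hi b c.+1 (S + a lo) (upd f lo b)
      else if S + a hi.-1 <= 1 then
        mm_loop k a fuel' lo hi.-1 b c.+1 (S + a hi.-1) (upd f hi.-1 b)
      else mm_loop k a fuel' lo hi b.+1 0 0 f
    else f
  end.

(* MM_k on a sorted input (sorting leaves it unchanged).  The fuel 2n+1 is
   enough for k >= 1: every bin-closing step is followed by a packing step. *)
Definition MM {R : realFieldType} (k : nat) (s : seq R) : nat -> nat :=
  mm_loop k (fun i => nth 0 s i) (2 * size s).+1 0 (size s) 0 0 0 (fun _ => 0%N).

Definition in_I1 {R : realFieldType} (s : seq R) (i : nat) : Prop :=
  [/\ (i < size s)%N, class1 s i & sole s (MM 2 s) i].

(* Let i be the last item of I_1.  The items 0..i all exceed 1/2, so they lie in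
   pairwise distinct bins of g.  When MM_2 packed i it stayed alone, so no item
   remaining at that moment fitted next to it; hence every later item y with
   a_i + a_y <= 1 had already been taken from the tail into the bin of an earlier
   head item, i.e. it shares its MM_2-bin with some x < i.  Now move every y > i
   that g places together with one of 0..i into the g-bin of its MM_2-mate.  No
   bin is emptied or created, and the new bin of each x <= i lies inside the
   MM_2-bin of x: it still fits, and it holds x alone whenever MM_2 does. *)

From HB Require Import structures.
From mathcomp Require Import all_boot all_order all_algebra.
From mathcomp Require Import zify lra.
Set Implicit Arguments. Unset Strict Implicit. Unset Printing Implicit Defensive.
Import Order.TTheory GRing.Theory Num.Theory.
Local Open Scope ring_scope.

Definition packed (lo hi : nat) : pred nat := fun y => (y < lo)%N || (hi <= y)%N.

Lemma packed_head lo hi : packed lo.+1 hi =1 predU1 lo (packed lo hi).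
Proof. by move=> y; rewrite /packed /= ltnS leq_eqVlt orbA. Qed.

Lemma packed_tail lo hi : (lo < hi)%N -> packed lo hi.-1 =1 predU1 hi.-1 (packed lo hi).
Proof. by case: hi => [|hi] // _ y; rewrite /packed /= (leq_eqVlt hi) (eq_sym hi) orbCA. Qed.

Section MMLoop.

Variables (R : realFieldType) (k n : nat) (a : nat -> R).
Hypothesis a_le1 : forall y, a y <= 1.

Local Notation mm := (mm_loop k a).

Lemma mm_loop_packed fuel lo hi b c S f y :
  packed lo hi y -> mm fuel lo hi b c S f y = f y.
Proof.
elim: fuel lo hi b c S f => [|fuel IH] lo hi b c S f y_packed //=.
case: ifP => // lt_lo_hi.
have upd_y j : ~~ packed lo hi j -> upd f j b y = f y.
  by rewrite /upd; case: eqP => // <-; rewrite y_packed.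
case: ifP => _; first exact: IH.
case: ifP => _.
  by rewrite IH ?upd_y //; move: y_packed; rewrite /packed; lia.
case: ifP => _; last exact: IH.
by rewrite IH ?upd_y //; move: y_packed; rewrite /packed; lia.
Qed.

Lemma mm_loop_mates fuel lo hi b c S f x y :
  packed lo hi x -> packed lo hi y -> f x = f y ->
  mm fuel lo hi b c S f x = mm fuel lo hi b c S f y.
Proof. by move=> x_packed y_packed; rewrite !mm_loop_packed. Qed.

Definition bin_load (pk : pred nat) (f : nat -> nat) (j : nat) : R :=
  \sum_(y < n | pk y && (f y == j)) a y.

Lemma eq_bin_load (pk pk' : pred nat) f : pk =1 pk' -> bin_load pk f =1 bin_load pk' f.
Proof. by move=> E j; apply: eq_bigl => y; rewrite E. Qed.

Lemma bin_load_unused (pk : pred nat) (f : nat -> nat) j :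
  ~~ [exists y : 'I_n, pk y && (f y == j)] -> bin_load pk f j = 0.
Proof. by move=> /existsPn unused; rewrite /bin_load big_pred0 // => y; apply/negbTE. Qed.

Lemma bin_load_pack (pk : pred nat) f j b j' : (j < n)%N -> ~~ pk j ->
  bin_load (predU1 j pk) (upd f j b) j' = (if b == j' then a j else 0) + bin_load pk f j'.
Proof.
move=> lt_jn pk_j; rewrite /bin_load.
have predE y : predU1 j pk y && (upd f j b y == j') =
               ((y == j) && (b == j')) || (pk y && (f y == j')).
  by rewrite /upd /=; case: eqP => [->|_] //=; rewrite (negbTE pk_j) orbF.
rewrite (eq_bigl _ _ (fun y : 'I_n => predE y)); case: eqP => [<-|_].
  rewrite (bigD1 (Ordinal lt_jn)) /= ?eqxx //; congr (_ + _).
  apply: eq_bigl => y; rewrite andbT -val_eqE /=.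
  by case: eqP => [->|_]; rewrite ?eqxx ?andbT ?andbF // (negbTE pk_j).
by rewrite add0r; apply: eq_bigl => y; rewrite andbF.
Qed.

Record mm_inv (pk : pred nat) (b c : nat) (S : R) (f : nat -> nat) : Prop := MMInv {
  mm_inv_load : forall j, bin_load pk f j <= 1;
  mm_inv_open : bin_load pk f b = S;
  mm_inv_fresh : forall y, (y < n)%N -> pk y -> (f y <= b)%N;
  mm_inv_used : (0 < c)%N = [exists y : 'I_n, pk y && (f y == b)] }.

Lemma mm_inv_init : mm_inv (packed 0 n) 0 0 0 (fun _ => 0%N).
Proof.
have unpacked (y : 'I_n) : packed 0 n y = false.
  by rewrite /packed ltn0 leqNgt ltn_ord.
have unused j : bin_load (packed 0 n) (fun _ => 0%N) j = 0.
  by apply: bin_load_unused; apply/existsPn => y; rewrite unpacked.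
split=> //; first by move=> j; rewrite unused ler01.
by apply/esym/existsPn => y; rewrite unpacked.
Qed.

Lemma mm_inv_close pk b c S f : mm_inv pk b c S f -> mm_inv pk b.+1 0 0 f.
Proof.
case=> load _ fresh _.
have unused : ~~ [exists y : 'I_n, pk y && (f y == b.+1)].
  apply/existsPn => y; apply/andP => -[pk_y /eqP fy].
  by have := fresh y (ltn_ord y) pk_y; rewrite fy ltnn.
split=> //; first exact: bin_load_unused.
- by move=> y lt_yn /(fresh y lt_yn) /leqW.
- by rewrite (negbTE unused).
Qed.

Lemma mm_inv_pack pk pk' b c S f j :
  mm_inv pk b c S f -> (j < n)%N -> ~~ pk j -> S + a j <= 1 -> pk' =1 predU1 j pk ->
  mm_inv pk' b c.+1 (S + a j) (upd f j b).
Proof.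
move=> [load open fresh _] lt_jn pk_j fit E.
have loadE j' : bin_load pk' (upd f j b) j' = (if b == j' then a j else 0) + bin_load pk f j'.
  by rewrite (eq_bin_load _ E) bin_load_pack.
split.
- by move=> j'; rewrite loadE; case: eqP => [<-|_]; rewrite ?add0r // open addrC.
- by rewrite loadE eqxx open addrC.
- move=> y lt_yn; rewrite E /upd => /predU1P [->|pk_y]; first by rewrite eqxx.
  by case: eqP => // _; apply: fresh.
- by apply/esym/existsP; exists (Ordinal lt_jn); rewrite E /= /upd !eqxx.
Qed.

Lemma mm_inv_empty pk b S f : mm_inv pk b 0 S f -> S = 0.
Proof. by case=> _ <- _ used; rewrite bin_load_unused // -used. Qed.

Lemma mm_inv_head_misfit pk b c S f y :
  mm_inv pk b c S f -> ~~ (S + a y <= 1) -> (0 < c)%N.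
Proof.
move=> inv; case: posnP => // c0; move: inv; rewrite c0 => /mm_inv_empty ->.
by rewrite add0r a_le1.
Qed.

(* Every step decreases [2 * (hi - lo) + (0 < c)]: packing removes an item, and a
   bin is only closed when it is non-empty. *)
Definition mm_fuel_ok (fuel lo hi c : nat) := (2 * (hi - lo) + (0 < c) < fuel)%N.

Lemma mm_loop_load_le1 fuel lo hi b c S f : (0 < k)%N ->
  (lo <= hi <= n)%N -> mm_inv (packed lo hi) b c S f -> mm_fuel_ok fuel lo hi c ->
  forall j, bin_load predT (mm fuel lo hi b c S f) j <= 1.
Proof.
move=> k_gt0; rewrite /mm_fuel_ok.
elim: fuel lo hi b c S f => [|fuel IH] lo hi b c S f bounds inv fuel_ok //=.
case: ifP => lt_lo_hi; last first.
  have all_packed : packed lo hi =1 predT by move=> y; rewrite /packed /=; lia.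
  by move=> j; rewrite -(eq_bin_load _ all_packed) (mm_inv_load inv).
case: eqP => [c_k|_].
  by apply: IH (mm_inv_close inv) _ => //; lia.
case: ifP => head_fit.
  apply: IH (mm_inv_pack inv _ _ head_fit (packed_head lo hi)) _; rewrite /packed; lia.
have c_gt0 := mm_inv_head_misfit inv (negbT head_fit).
case: ifP => tail_fit; last by apply: IH (mm_inv_close inv) _ => //; lia.
apply: IH (mm_inv_pack inv _ _ tail_fit (packed_tail lt_lo_hi)) _; rewrite /packed; lia.
Qed.

Definition tail_mated (lo hi : nat) (f : nat -> nat) :=
  forall y, (hi <= y < n)%N -> exists2 x, (x < lo)%N & f x = f y.

Lemma tail_mated_head lo hi b f : (lo < hi)%N ->
  tail_mated lo hi f -> tail_mated lo.+1 hi (upd f lo b).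
Proof.
move=> lt_lo_hi mated y y_range; have [x lt_x_lo fx] := mated y y_range.
by exists x; rewrite 1?/upd ?ifN_eq //; lia.
Qed.

Lemma tail_mated_tail lo hi b f x : (lo < hi)%N -> (x < lo)%N -> f x = b ->
  tail_mated lo hi f -> tail_mated lo hi.-1 (upd f hi.-1 b).
Proof.
move=> lt_lo_hi lt_x_lo fx mated y y_range; have [lt_y_hi | le_hi_y] := ltnP y hi.
  by exists x; rewrite // /upd ifN_eq ?ifT //; lia.
have /mated [x' lt_x' fx'] : (hi <= y < n)%N by lia.
by exists x'; rewrite // /upd !ifN_eq //; lia.
Qed.

Lemma mm_inv_open_mate lo hi b c S f : (0 < c)%N ->
  mm_inv (packed lo hi) b c S f -> tail_mated lo hi f -> exists2 x, (x < lo)%N & f x = b.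
Proof.
move=> c_gt0 [_ _ _ used] mated; move: c_gt0; rewrite used.
case/existsP=> y /andP [/orP [lt_y_lo | le_hi_y] /eqP fy]; first by exists y.
have /mated [x lt_x fx] : (hi <= y < n)%N by rewrite le_hi_y ltn_ord.
by exists x; rewrite // fx.
Qed.

Lemma mm_loop_open_grows fuel lo hi b c S f : (lo < hi)%N -> c != k ->
  S + a hi.-1 <= 1 -> exists2 y, (lo <= y < hi)%N & mm fuel.+1 lo hi b c S f y = b.
Proof.
move=> lt_lo_hi ne_ck tail_fit /=; rewrite lt_lo_hi (negbTE ne_ck).
case: ifP => _; first by exists lo; rewrite ?mm_loop_packed /upd ?eqxx // /packed; lia.
by rewrite tail_fit; exists hi.-1; rewrite ?mm_loop_packed /upd ?eqxx // /packed; lia.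
Qed.

Section SoleItem.

Hypothesis k_gt1 : (1 < k)%N.
Hypothesis a_mono : forall x y, (x <= y)%N -> (y < n)%N -> a y <= a x.

Definition alone (F : nat -> nat) (x : nat) :=
  forall z, (z < n)%N -> z != x -> F z != F x.

Lemma mm_loop_alone_unshared fuel lo hi b c S f x y :
  alone (mm fuel lo hi b c S f) y -> (x < n)%N -> packed lo hi x -> packed lo hi y ->
  f x = f y -> x = y.
Proof.
move=> alone_y lt_xn x_packed y_packed fxy; case: (eqVneq x y) => // /(alone_y x lt_xn).
by rewrite (mm_loop_mates fuel b c S x_packed y_packed fxy) eqxx.
Qed.

Lemma mm_loop_alone_open_full fuel lo hi b c S f x :
  (0 < fuel)%N -> (hi <= n)%N -> c != k -> (x < n)%N -> packed lo hi x -> f x = b ->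
  alone (mm fuel lo hi b c S f) x -> forall y, (lo <= y < hi)%N -> 1 < S + a y.
Proof.
case: fuel => // fuel _ le_hi_n ne_ck lt_xn x_packed fx alone_x y y_range.
rewrite ltNge; apply/negP => fit.
have tail_fit : S + a hi.-1 <= 1.
  by apply: le_trans fit; rewrite lerD2l a_mono //; lia.
have lt_lo_hi : (lo < hi)%N by lia.
have [z z_range Fz] := mm_loop_open_grows fuel b f lt_lo_hi ne_ck tail_fit.
have z_ne_x : z != x by apply: contraTneq x_packed => <-; rewrite /packed; lia.
have lt_zn : (z < n)%N by lia.
by move: (alone_x z lt_zn z_ne_x); rewrite Fz mm_loop_packed // fx eqxx.
Qed.

Lemma mm_loop_alone_head fuel lo hi b c S f y :
  (lo < y < hi)%N -> (hi <= n)%N -> mm_inv (packed lo hi) b c S f -> tail_mated lo hi f ->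
  (0 < fuel)%N -> c != k -> alone (mm fuel lo.+1 hi b c.+1 (S + a lo) (upd f lo b)) lo ->
  1 < a lo + a y.
Proof.
move=> y_range le_hi_n inv mated fuel_gt0 ne_ck alone_lo.
have [c0 | c_gt0] := posnP c; last first.
  have [x lt_x_lo fx] := mm_inv_open_mate c_gt0 inv mated.
  have := mm_loop_alone_unshared (x := x) alone_lo.
  by rewrite /upd eqxx ifN_eq /packed; lia.
have S0 : S = 0 by move: inv; rewrite c0 => /mm_inv_empty.
rewrite -[a lo]add0r -S0.
by apply: (mm_loop_alone_open_full _ _ _ _ _ _ alone_lo); rewrite ?/upd ?eqxx // ?/packed; lia.
Qed.

Lemma mm_loop_sole_mate fuel lo hi b c S f i y :
  (lo <= hi <= n)%N -> mm_inv (packed lo hi) b c S f -> tail_mated lo hi f ->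
  mm_fuel_ok fuel lo hi c -> (lo <= i < hi)%N -> alone (mm fuel lo hi b c S f) i ->
  (i < y < n)%N -> a i + a y <= 1 ->
  exists2 x, (x < i)%N & mm fuel lo hi b c S f x = mm fuel lo hi b c S f y.
Proof.
move=> + + + + + + y_range fit; rewrite /mm_fuel_ok.
elim: fuel lo hi b c S f => [|fuel IH] lo hi b c S f bounds inv mated fuel_ok i_range //.
have [le_hi_y | lt_y_hi] := leqP hi y.
  move=> _; have /mated [x lt_x_lo fx] : (hi <= y < n)%N by lia.
  by exists x; [lia | apply: mm_loop_mates; rewrite // /packed; lia].
have lt_lo_hi : (lo < hi)%N by lia.
rewrite /alone /= lt_lo_hi -/(alone _ i).
case: eqP => [c_k | /eqP ne_ck].
  by apply: (IH lo hi b.+1 0 0 f) => //; [exact: mm_inv_close inv | lia].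
case: ifP => head_fit.
  have [lt_lo_i | le_i_lo] := ltnP lo i.
    apply: (IH lo.+1 hi b c.+1 (S + a lo) (upd f lo b)) => //; try lia.
    - by apply: (mm_inv_pack inv _ _ head_fit (packed_head lo hi)); rewrite /packed; lia.
    - exact: tail_mated_head.
  have i_lo : i = lo by lia.
  subst i => alone_lo; suff : 1 < a lo + a y by rewrite ltNge fit.
  by apply: (mm_loop_alone_head _ _ inv mated _ ne_ck alone_lo); lia.
have c_gt0 := mm_inv_head_misfit inv (negbT head_fit).
have [x lt_x_lo fx] := mm_inv_open_mate c_gt0 inv mated.
case: ifP => tail_fit; last first.
  by apply: (IH lo hi b.+1 0 0 f) => //; [exact: mm_inv_close inv | lia].
have [lt_i_hi1 | le_hi1_i] := ltnP i hi.-1.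
  apply: (IH lo hi.-1 b c.+1 (S + a hi.-1) (upd f hi.-1 b)) => //; try lia.
  - by apply: (mm_inv_pack inv _ _ tail_fit (packed_tail lt_lo_hi)); rewrite /packed; lia.
  - exact: tail_mated_tail lt_lo_hi lt_x_lo fx mated.
have i_hi1 : i = hi.-1 by lia.
subst i => alone_i; exfalso.
have := mm_loop_alone_unshared (x := x) alone_i.
by rewrite /upd eqxx ifN_eq ?fx /packed; lia.
Qed.

End SoleItem.

End MMLoop.

Section Items.

Variables (R : realFieldType) (s : seq R).
Local Notation n := (size s).
Local Notation a := (nth 0 s).

Lemma items_ok_ge0 : items_ok s -> forall y, 0 <= a y.
Proof.
move=> /(all_nthP 0) s_ok y; have [/s_ok /andP [/ltW] // | le_n_y] := ltnP y n.
by rewrite nth_default.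
Qed.

Lemma items_ok_le1 : items_ok s -> forall y, a y <= 1.
Proof.
move=> /(all_nthP 0) s_ok y; have [/s_ok /andP [] // | le_n_y] := ltnP y n.
by rewrite nth_default ?ler01.
Qed.

Lemma sorted_items_nth : sorted_items s -> forall x y, (x <= y)%N -> (y < n)%N -> a y <= a x.
Proof.
move=> s_sorted x y le_xy lt_yn.
have geT_trans : transitive (fun u v : R => v <= u) by move=> u v w /= ? /le_trans; apply.
apply: (sorted_leq_nth geT_trans (fun u => lexx u) 0 s_sorted) => //; rewrite inE.
exact: leq_ltn_trans lt_yn.
Qed.

Lemma assignment_mates_fit g x y : items_ok s -> is_assignment s g ->
  (x < n)%N -> (y < n)%N -> x != y -> g x = g y -> a x + a y <= 1.
Proof.
move=> s_ok g_asg lt_xn lt_yn ne_xy gxy; apply: le_trans (g_asg (g x)).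
rewrite (bigD1 (Ordinal lt_xn)) ?eqxx //= (bigD1 (Ordinal lt_yn)) /=; last first.
  by rewrite gxy eqxx -val_eqE /= eq_sym.
by rewrite addrA lerDl sumr_ge0 // => z _; apply: items_ok_ge0.
Qed.

Lemma nbins_eq_mem g g' :
  [seq g y | y <- iota 0 n] =i [seq g' y | y <- iota 0 n] -> nbins s g = nbins s g'.
Proof.
move=> eq_img; apply: perm_size; apply: uniq_perm; rewrite ?undup_uniq // => j.
by rewrite !mem_undup.
Qed.

Lemma soleP g i : reflect (sole s g i) (all (fun y => (y == i) || (g y != g i)) (iota 0 n)).
Proof.
apply: (iffP allP) => [sole_i y lt_yn ne_yi | sole_i y].
  by move: (sole_i y); rewrite mem_iota lt_yn (negbTE ne_yi); apply.
by rewrite mem_iota /=; case: eqP => //= /eqP ne_yi lt_yn; apply: sole_i.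
Qed.

End Items.

Lemma MM_is_assignment (R : realFieldType) k (s : seq R) :
  (0 < k)%N -> items_ok s -> is_assignment s (MM k s).
Proof.
move=> k_gt0 s_ok j.
have fuel_ok : mm_fuel_ok (2 * size s).+1 0 (size s) 0 by rewrite /mm_fuel_ok; lia.
by apply: (mm_loop_load_le1 (items_ok_le1 s_ok) k_gt0 _ (mm_inv_init _ _) fuel_ok); rewrite leqnn.
Qed.

Lemma MM_sole_mate (R : realFieldType) k (s : seq R) i :
  (1 < k)%N -> items_ok s -> sorted_items s -> (i < size s)%N -> sole s (MM k s) i ->
  forall y, (i < y < size s)%N -> nth 0 s i + nth 0 s y <= 1 ->
  exists2 x, (x < i)%N & MM k s x = MM k s y.
Proof.
move=> k_gt1 s_ok s_sorted lt_i_n sole_i y y_range fit.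
apply: (mm_loop_sole_mate (items_ok_le1 s_ok) k_gt1 (sorted_items_nth s_sorted) _
  (mm_inv_init _ _) _ _ _ sole_i y_range fit) => //; rewrite /mm_fuel_ok; try lia.
by move=> z; lia.
Qed.

Lemma ler_sum_subpred (R : numDomainType) (I : Type) (r : seq I) (P Q : pred I) (F : I -> R) :
  (forall x, P x -> Q x) -> (forall x, Q x -> 0 <= F x) ->
  \sum_(x <- r | P x) F x <= \sum_(x <- r | Q x) F x.
Proof.
move=> PQ F_ge0; rewrite [leLHS]big_mkcond [leRHS]big_mkcond ler_sum // => x _.
by case: ifP => [/PQ -> // | _]; case: ifP => // /F_ge0.
Qed.

Section Regroup.

Variables (R : realFieldType) (s : seq R) (g F : nat -> nat) (i : nat).
Local Notation n := (size s).
Local Notation a := (nth 0 s).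
Hypotheses (s_ok : items_ok s) (s_sorted : sorted_items s).
Hypotheses (g_asg : is_assignment s g) (F_asg : is_assignment s F).
Hypotheses (lt_i_n : (i < n)%N) (i_class1 : class1 s i).
Hypothesis F_mate :
  forall y, (i < y < n)%N -> a i + a y <= 1 -> exists2 x, (x < i)%N & F x = F y.

Definition moved y := (i < y)%N && has (fun x => g x == g y) (iota 0 i.+1).

(* [find] returns [i.+1] when there is no such [x]; [mate] is only used on moved
   items, which have a mate by [F_mate]. *)
Definition mate y := find (fun x => F x == F y) (iota 0 i.+1).

Definition regroup y := if moved y then g (mate y) else g y.

Lemma large_bins_inj x x' : (x <= i)%N -> (x' <= i)%N -> g x = g x' -> x = x'.
Proof.
move=> le_xi le_x'i gxx'; apply/eqP; apply: contraTT isT => ne_xx'.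
have := assignment_mates_fit s_ok g_asg (leq_ltn_trans le_xi lt_i_n)
  (leq_ltn_trans le_x'i lt_i_n) ne_xx' gxx'.
have := sorted_items_nth s_sorted le_xi lt_i_n.
have := sorted_items_nth s_sorted le_x'i lt_i_n.
move: i_class1; rewrite /class1; lra.
Qed.

Lemma mate_spec y : (y < n)%N -> moved y -> (mate y <= i)%N /\ F (mate y) = F y.
Proof.
move=> lt_yn /andP [lt_iy /hasP [x]]; rewrite mem_iota ltnS => /andP [_ le_xi] /eqP gxy.
have fit : a i + a y <= 1.
  apply: le_trans (assignment_mates_fit s_ok g_asg _ lt_yn _ gxy); rewrite ?lerD2r;
    [exact: sorted_items_nth | lia | apply/eqP; lia].
have /F_mate/(_ fit) [x' lt_x'i Fx'] : (i < y < n)%N by rewrite lt_iy.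
have has_mate : has (fun x => F x == F y) (iota 0 i.+1).
  by apply/hasP; exists x'; rewrite ?mem_iota ?Fx' //; lia.
have lt_mate := has_mate; rewrite has_find size_iota in lt_mate.
by have := nth_find 0 has_mate; rewrite nth_iota // => /eqP.
Qed.

Lemma regroup_large_bin x y : (x <= i)%N -> (y < n)%N -> regroup y = g x -> F y = F x.
Proof.
move=> le_xi lt_yn; rewrite /regroup; case: ifP => [mv | not_mv] gyx.
  by have [le_mi <-] := mate_spec lt_yn mv; rewrite (large_bins_inj le_mi le_xi gyx).
have [le_yi | lt_iy] := leqP y i; first by rewrite (large_bins_inj le_yi le_xi gyx).
suff : moved y by rewrite not_mv.
by rewrite /moved lt_iy; apply/hasP; exists x; rewrite ?mem_iota ?gyx //; lia.
Qed.

Lemma regroup_is_assignment : is_assignment s regroup.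
Proof.
move=> j; have [/hasP [x] | no_large] := boolP (has (fun x => g x == j) (iota 0 i.+1)).
  rewrite mem_iota ltnS => /andP [_ le_xi] /eqP gxj; apply: le_trans (F_asg (F x)).
  apply: ler_sum_subpred => [y /eqP | y _]; last exact: items_ok_ge0.
  by rewrite -gxj => /(regroup_large_bin le_xi (ltn_ord y)) ->.
apply: le_trans (g_asg j); apply: ler_sum_subpred => [y | y _]; last exact: items_ok_ge0.
rewrite /regroup; case: ifP => // mv /eqP gmj; case/hasP: no_large; exists (mate y).
  by rewrite mem_iota ltnS (mate_spec (ltn_ord y) mv).1.
by rewrite gmj.
Qed.

Lemma regroup_nbins : nbins s regroup = nbins s g.
Proof.
apply: nbins_eq_mem => j; apply/mapP/mapP => -[y]; rewrite mem_iota /= => lt_yn ->.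
  rewrite /regroup; case: ifP => [mv | _]; last by exists y; rewrite ?mem_iota.
  by exists (mate y); rewrite // mem_iota (leq_ltn_trans (mate_spec lt_yn mv).1).
case: (boolP (moved y)) => [/andP [_ /hasP [x]] | not_mv].
  rewrite mem_iota ltnS => /andP [_ le_xi] /eqP <-.
  by exists x; rewrite ?mem_iota /regroup /moved 1?ltnNge ?le_xi //; lia.
by exists y; rewrite ?mem_iota /regroup ?(negbTE not_mv).
Qed.

Lemma regroup_sole x : (x <= i)%N -> sole s F x -> sole s regroup x.
Proof.
move=> le_xi sole_x y lt_yn ne_yx; rewrite {2}/regroup /moved ltnNge le_xi /=.
by apply: contra (sole_x y lt_yn ne_yx) => /eqP /(regroup_large_bin le_xi lt_yn) ->.
Qed.

End Regroup.

Theorem lemma2 (R : realFieldType) (s : seq R) :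
  items_ok s -> sorted_items s ->
  forall g : nat -> nat, is_assignment s g ->
  exists g' : nat -> nat,
    [/\ is_assignment s g', nbins s g' = nbins s g &
        forall i, in_I1 s i -> sole s g' i].
Proof.
move=> s_ok s_sorted g g_asg.
have F_asg : is_assignment s (MM 2 s) by apply: MM_is_assignment.
pose I1b i := [&& (i < size s)%N, class1 s i &
  all (fun y => (y == i) || (MM 2 s y != MM 2 s i)) (iota 0 (size s))].
have I1P i : in_I1 s i <-> I1b i.
  by rewrite /I1b; split=> [[-> -> /soleP] | /and3P [? ? /soleP]].
have [/hasP [i0 _ I1i0] | no_I1] := boolP (has I1b (iota 0 (size s))); last first.
  exists g; split=> // i /I1P I1i; case/hasP: no_I1; exists i => //.
  by rewrite mem_iota; case/and3P: I1i.
have ub_I1 i : I1b i -> (i <= size s)%N by case/and3P => /ltnW.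
case: (ex_maxnP (ex_intro _ i0 I1i0) ub_I1) => i /I1P [lt_i_n i_class1 i_sole] max_i.
have F_mate := MM_sole_mate (ltnSn 1) s_ok s_sorted lt_i_n i_sole.
exists (regroup g (MM 2 s) i); split; first exact: regroup_is_assignment.
  exact: regroup_nbins.
move=> i' /[dup] /I1P /max_i le_i'i [_ _ sole_i'].
by apply: regroup_sole le_i'i sole_i'.
Qed.
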